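(* Each of the following graphs is a transparent rectangle visibility graph (TRVG): (i) every threshold graph; (ii) every tree; (iii) every cycle $C_n$ ($n\ge 3$); (iv) the infinite rectangular grid graph; (v) the infinite triangular grid graph; (vi) the infinite hexagonal grid graph.
   Context: A graph $G$ is a transparent rectangle visibility graph (TRVG) if its vertices can be represented by a collection of pairwise non-overlapping (interior-disjoint) rectangles in the plane whose sides are parallel to the coordinate axes, one rectangle per vertex, such that two distinct vertices are adjacent if and only if there is a horizontal or a vertical line intersecting the interiors of both of their rectangles (other rectangles lying in between do not block visibility). For infinite graphs the collection of rectangles is infinite. A threshold graph is a finite graph that can be built from the one-vertex graph by repeatedly either adding an isolated vertex or adding a universal vertex (a new vertex adjacent to all existing vertices). The infinite rectangular grid graph has vertex set $\mathbb{Z}^2$, with $(i,j)$ and $(i',j')$ adjacent iff $|i-i'|+|j-j'|=1$. The infinite triangular grid graph has vertex set $\{v_{i,j}: i,j\in\mathbb{Z}\}$ where $v_{i,j}$ is adjacent exactly to $v_{i-1,j},v_{i+1,j},v_{i,j-1},v_{i+1,j-1},v_{i-1,j+1},v_{i,j+1}$ (the triangular lattice, each vertex of degree 6). The infinite hexagonal grid graph is the honeycomb lattice (the infinite 3-regular planar graph whose faces are hexagons); equivalently, the subgraph of the infinite triangular grid graph induced by removing the vertices $v_{a+3b,a}$ for all $a,b\in\mathbb{Z}$. *)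

From Stdlib Require Import Reals ZArith.
From mathcomp Require Import all_boot.

Set Implicit Arguments.
Unset Strict Implicit.
Unset Printing Implicit Defensive.

Record rect := Rect { rx1 : R; rx2 : R; ry1 : R; ry2 : R }.

Definition nondegenerate (r : rect) : Prop :=
  Rlt (rx1 r) (rx2 r) /\ Rlt (ry1 r) (ry2 r).

Definition in_interior (r : rect) (x y : R) : Prop :=
  (Rlt (rx1 r) x /\ Rlt x (rx2 r)) /\ (Rlt (ry1 r) y /\ Rlt y (ry2 r)).

Definition interiors_disjoint (r s : rect) : Prop :=
  ~ (exists x y, in_interior r x y /\ in_interior s x y).

Definition horiz_visible (r s : rect) : Prop :=
  exists c, (exists x, in_interior r x c) /\ (exists x', in_interior s x' c).

Definition vert_visible (r s : rect) : Prop :=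
  exists c, (exists y, in_interior r c y) /\ (exists y', in_interior s c y').

Definition is_TRVG (V : Type) (adj : V -> V -> Prop) : Prop :=
  exists f : V -> rect,
    (forall v, nondegenerate (f v)) /\
    (forall u v, u <> v -> interiors_disjoint (f u) (f v)) /\
    (forall u v, u <> v -> (adj u v <-> horiz_visible (f u) (f v) \/ vert_visible (f u) (f v))).

(* Threshold graph: built from one vertex by repeatedly adding an isolated
   or a universal vertex.  [ord v] is the step at which v is added and
   [b k] says whether the vertex added at step k was universal. *)
Definition is_threshold (V : finType) (e : rel V) : Prop :=
  (0 < #|V|)%N /\ irreflexive e /\
  exists (ord : V -> nat) (b : nat -> bool),
    injective ord /\
    forall u v, u != v -> e u v = b (maxn (ord u) (ord v)).

Definition has_cycle (V : finType) (e : rel V) : Prop :=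
  exists p : seq V, (3 <= size p)%N /\ uniq p /\ cycle e p.

Definition is_tree (V : finType) (e : rel V) : Prop :=
  (0 < #|V|)%N /\ (forall x y, connect e x y) /\ ~ has_cycle e.

Definition cycle_adj (n : nat) (i j : 'I_n) : Prop :=
  (val j = (val i).+1 %% n)%N \/ (val i = (val j).+1 %% n)%N.

Definition rect_grid_adj (p q : Z * Z) : Prop :=
  (Z.abs (fst p - fst q) + Z.abs (snd p - snd q) = 1)%Z.

Definition tri_grid_adj (p q : Z * Z) : Prop :=
  let i := fst p in let j := snd p in
  q = (i - 1, j)%Z \/ q = (i + 1, j)%Z \/ q = (i, j - 1)%Z \/
  q = (i + 1, j - 1)%Z \/ q = (i - 1, j + 1)%Z \/ q = (i, j + 1)%Z.

Definition hex_vertex : Type :=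
  { p : Z * Z | ~ exists a b : Z, p = (a + 3 * b, a)%Z }.

Definition hex_grid_adj (u v : hex_vertex) : Prop :=
  tri_grid_adj (proj1_sig u) (proj1_sig v).

From Stdlib Require Import Reals ZArith Lra Lia ProofIrrelevance.
From mathcomp Require Import all_boot zify.

(* Rectangles see each other exactly when their x- or y-projections meet, so
   it suffices to choose two families of open intervals.  They are chosen in
   integer "slots": the integer interval (a, b) of slot s becomes the real
   interval (4s + atan a, 4s + atan b), so intervals in different slots never
   meet, while one slot holds unboundedly many integer intervals.  A tree is
   drawn from a root: each vertex owns a full-width slot, and gets a private
   cell in its parent's slot in the other direction, the directions
   alternating with the parity of the depth; for the other graphs the slots
   are rows, columns, or a single line. *)

Set Implicit Arguments.
Unset Strict Implicit.
Unset Printing Implicit Defensive.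

Local Open Scope R_scope.

Lemma open_intervals_meet (a b c d : R) : a < b -> c < d ->
  (exists x, (a < x < b) /\ (c < x < d)) <-> a < d /\ c < b.
Proof.
move=> ab cd; split=> [[x]|[ad cb]]; first lra.
have lt_max_min : Rmax a c < Rmin b d.
  by apply: Rmax_lub_lt; apply: Rmin_glb_lt.
exists ((Rmax a c + Rmin b d) / 2).
have := Rmax_l a c; have := Rmax_r a c; have := Rmin_l b d; have := Rmin_r b d; lra.
Qed.

Lemma horiz_visibleE (r s : rect) : nondegenerate r -> nondegenerate s ->
  horiz_visible r s <-> ry1 r < ry2 s /\ ry1 s < ry2 r.
Proof.
move=> [rx ry] [sx sy]; rewrite -open_intervals_meet //.
split=> [[c [[x [_ rc]] [x' [_ sc]]]] | [c [rc sc]]]; first by exists c.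
exists c; split; [exists ((rx1 r + rx2 r) / 2) | exists ((rx1 s + rx2 s) / 2)];
  rewrite /in_interior; lra.
Qed.

Lemma vert_visibleE (r s : rect) : nondegenerate r -> nondegenerate s ->
  vert_visible r s <-> rx1 r < rx2 s /\ rx1 s < rx2 r.
Proof.
move=> [rx ry] [sx sy]; rewrite -open_intervals_meet //.
split=> [[c [[y [rc _]] [y' [sc _]]]] | [c [rc sc]]]; first by exists c.
exists c; split; [exists ((ry1 r + ry2 r) / 2) | exists ((ry1 s + ry2 s) / 2)];
  rewrite /in_interior; lra.
Qed.

Lemma interiors_disjoint_of_projections (r s : rect) :
  ~ ((rx1 r < rx2 s /\ rx1 s < rx2 r) /\ (ry1 r < ry2 s /\ ry1 s < ry2 r)) ->
  interiors_disjoint r s.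
Proof. by move=> no_meet [x [y []]]; rewrite /in_interior => *; apply: no_meet; lra. Qed.

Definition lex_embed (s a : Z) : R := 4 * IZR s + atan (IZR a).

Lemma lex_embed_lt (s a s' b : Z) :
  lex_embed s a < lex_embed s' b <-> (s < s')%Z \/ s = s' /\ (a < b)%Z.
Proof.
have atan_small x : - 2 < atan x < 2 by have := atan_bound x; have := PI_4; lra.
have atan_ltE x y : atan (IZR x) < atan (IZR y) <-> (x < y)%Z.
  split=> [|/IZR_lt/atan_increasing //]; case: (Z.lt_ge_cases x y) => // /IZR_le.
  by case/Rle_lt_or_eq=> [/atan_increasing|->]; lra.
rewrite /lex_embed; have := atan_small (IZR a); have := atan_small (IZR b).
case: (Z.lt_trichotomy s s') => [lt|[<-|gt]] ha hb.
- by have /IZR_le := Zlt_le_succ _ _ lt; rewrite succ_IZR; split; [left | lra].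
- split=> [lt | [/Z.lt_irrefl // | [_ /atan_ltE]]]; last lra.
  by right; split=> //; apply/atan_ltE; lra.
- by have /IZR_le := Zlt_le_succ _ _ gt; rewrite succ_IZR; split; [lra | lia].
Qed.

Record slotted := Slotted { slot : Z; lo : Z; hi : Z }.

Definition overlap (I J : slotted) : Prop :=
  slot I = slot J /\ (lo I < hi J)%Z /\ (lo J < hi I)%Z.

Lemma overlap_sym (I J : slotted) : overlap I J <-> overlap J I.
Proof. by rewrite /overlap; lia. Qed.

Definition embed_lo (I : slotted) : R := lex_embed (slot I) (lo I).
Definition embed_hi (I : slotted) : R := lex_embed (slot I) (hi I).

Lemma embed_overlap (I J : slotted) :
  embed_lo I < embed_hi J /\ embed_lo J < embed_hi I <-> overlap I J.
Proof. by rewrite /embed_lo /embed_hi /overlap !lex_embed_lt; lia. Qed.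

Definition slotted_rect (X Y : slotted) : rect :=
  Rect (embed_lo X) (embed_hi X) (embed_lo Y) (embed_hi Y).

Lemma is_TRVG_slotted (V : Type) (adj : V -> V -> Prop) (X Y : V -> slotted) :
  (forall v, (lo (X v) < hi (X v))%Z /\ (lo (Y v) < hi (Y v))%Z) ->
  (forall u v, u <> v -> ~ (overlap (X u) (X v) /\ overlap (Y u) (Y v))) ->
  (forall u v, u <> v -> adj u v <-> overlap (X u) (X v) \/ overlap (Y u) (Y v)) ->
  is_TRVG adj.
Proof.
move=> proper disjoint adjE.
have nondeg v : nondegenerate (slotted_rect (X v) (Y v)).
  by have [? ?] := proper v; split; apply/lex_embed_lt; right.
exists (fun v => slotted_rect (X v) (Y v)); split=> //; split=> u v uv.
  by apply: interiors_disjoint_of_projections; rewrite /= !embed_overlap; apply: disjoint.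
by rewrite horiz_visibleE // vert_visibleE //= !embed_overlap adjE //; tauto.
Qed.

Close Scope R_scope.
Local Open Scope Z_scope.

Lemma is_TRVG_comap (V W : Type) (adj : V -> V -> Prop) (g : W -> V) :
  injective g -> is_TRVG adj -> is_TRVG (fun a b => adj (g a) (g b)).
Proof.
move=> g_inj [f [nondeg [disjoint adjE]]]; exists (f \o g).
split=> [v | ]; first exact: nondeg.
by split=> a b ab; [apply: disjoint | apply: adjE]; apply: contra_not ab => /g_inj.
Qed.

Lemma pair_neq (a b c d : Z) : (a, b) <> (c, d) -> a <> c \/ b <> d.
Proof.
case: (Z.eq_dec b d) => [<- ne | ne _]; last by right.
by left=> ac; apply: ne; rewrite ac.
Qed.

Lemma rect_grid_is_TRVG : is_TRVG rect_grid_adj.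
Proof.
apply: (@is_TRVG_slotted _ _ (fun p => Slotted p.2 (2 * p.1) (2 * p.1 + 3))
                             (fun p => Slotted p.1 (2 * p.2) (2 * p.2 + 3)))
  => [p | [a b] [c d] /pair_neq | [a b] [c d] /pair_neq];
  rewrite /overlap /rect_grid_adj; cbn [slot lo hi fst snd]; lia.
Qed.

(* Rows 2k and 2k+1 share a horizontal slot, rows 2k+1 and 2k+2 a vertical
   one; shifting odd rows by half a cell makes each vertex meet exactly its two
   neighbours in the next row. *)
Lemma tri_grid_is_TRVG : is_TRVG tri_grid_adj.
Proof.
apply: (@is_TRVG_slotted _ _
  (fun p => Slotted (p.2 / 2) (2 * p.1 + p.2 mod 2) (2 * p.1 + p.2 mod 2 + 3))
  (fun p => Slotted ((p.2 - 1) / 2) (2 * p.1 + (p.2 - 1) mod 2)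
                                     (2 * p.1 + (p.2 - 1) mod 2 + 2)))
  => [p | [a b] [c d] /pair_neq | [a b] [c d] /pair_neq];
  rewrite /overlap /tri_grid_adj ?pair_equal_spec; cbn [slot lo hi fst snd].
all: Z.to_euclidean_division_equations; lia.
Qed.

Lemma hex_grid_is_TRVG : is_TRVG hex_grid_adj.
Proof.
apply: (@is_TRVG_comap _ _ _ (@proj1_sig _ _) _ tri_grid_is_TRVG) => u v.
by apply: eq_sig_hprop => p h h'; apply: proof_irrelevance.
Qed.

Lemma modn_succ_small (i n : nat) : (i < n)%N ->
  (i.+1 %% n = if i.+1 == n then 0 else i.+1)%N.
Proof.
move=> lt_in; case: eqP => [->|ne]; first by rewrite modnn.
by rewrite modn_small // ltn_neqAle lt_in andbT; apply/eqP.
Qed.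

Lemma cycle_is_TRVG (n : nat) : (3 <= n)%N -> is_TRVG (@cycle_adj n).
Proof.
move=> n_ge3.
apply: (@is_TRVG_slotted _ _
  (fun i : 'I_n => Slotted 0 (2 * Z.of_nat i) (2 * Z.of_nat i + 3))
  (fun i : 'I_n => Slotted (if i == n.-1 :> nat then 0 else Z.of_nat i) 0 1))
  => [i | i j | i j]; rewrite /overlap /cycle_adj; cbn [slot lo hi]; first lia;
  move=> ij; have {ij} : (i : nat) <> j by apply: contra_not ij => /val_inj.
all: change (val i) with (nat_of_ord i); change (val j) with (nat_of_ord j).
all: rewrite ?modn_succ_small //; have := ltn_ord i; have := ltn_ord j.
all: do ?case: eqP; lia.
Qed.

(* The vertex added at step k gets the cell (2k, 2k+1) of a common slot, stretched
   to (0, 2k+1) over all earlier cells when it is universal. *)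
Lemma threshold_is_TRVG (V : finType) (e : rel V) : is_threshold e -> is_TRVG e.
Proof.
move=> [_ [_ [step [universal [step_inj eE]]]]].
apply: (@is_TRVG_slotted _ _
  (fun v => Slotted 0 (if universal (step v) then 0 else 2 * Z.of_nat (step v))
                      (2 * Z.of_nat (step v) + 1))
  (fun v => Slotted (Z.of_nat (step v)) 0 1))
  => [v | u v | u v]; rewrite /overlap; cbn [slot lo hi].
- by case: (universal (step v)); lia.
- by move=> uv [_ [/Nat2Z.inj step_uv _]]; apply: uv; apply: step_inj.
move=> uv; rewrite eE; last by apply/eqP.
have : step u <> step v by apply: contra_not uv; apply: step_inj.
case: (leqP (step u) (step v)) => step_order;
  case: (universal (step u)); case: (universal (step v)); lia.
Qed.

Definition parent_link (V : Type) (depth : V -> nat) (parent : V -> V) (u v : V) :=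
  (0 < depth u)%N /\ parent u = v.

Section RootedForest.

Variables (V : finType) (e : rel V) (depth : V -> nat) (parent : V -> V).
Hypothesis depth_parent : forall v, (0 < depth v)%N -> (depth (parent v)).+1 = depth v.
Hypothesis forest_edgeE : forall u v, u <> v ->
  e u v <-> parent_link depth parent u v \/ parent_link depth parent v u.

Local Notation link := (parent_link depth parent).

Lemma parent_link_odd u v : link u v -> odd (depth u) = ~~ odd (depth v).
Proof. by move=> [pos_u <-]; rewrite -(depth_parent pos_u). Qed.

Lemma parent_link_asym u v : link u v -> ~ link v u.
Proof.
move=> [pos_u <-] [pos_pu pu]; move: (depth_parent pos_u) (depth_parent pos_pu).
by rewrite pu; lia.
Qed.

Definition index (v : V) : Z := Z.of_nat (enum_rank v).

Lemma index_bounds v : 0 <= index v < Z.of_nat #|V|.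
Proof. by have : (enum_rank v < #|V|)%N := ltn_ord (enum_rank v); rewrite /index; lia. Qed.

Lemma index_inj u v : index u = index v -> u = v.
Proof. by move/Nat2Z.inj/val_inj/enum_rank_inj. Qed.

(* Roots put their private cell into the otherwise unused slot -1. *)
Definition long (v : V) := Slotted (index v) 0 (2 * Z.of_nat #|V|).
Definition short (v : V) :=
  Slotted (if depth v == 0%N then -1 else index (parent v)) (2 * index v) (2 * index v + 1).

Lemma overlap_long u v : u <> v -> ~ overlap (long u) (long v).
Proof. by move=> uv [/index_inj]. Qed.

Lemma overlap_short u v : u <> v -> ~ overlap (short u) (short v).
Proof.
rewrite /overlap /short; cbn [slot lo hi] => uv [_ lt_uv].
by apply: uv; apply: index_inj; lia.
Qed.

Lemma overlap_short_long u v : overlap (short u) (long v) <-> link u v.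
Proof.
have := index_bounds u; have := index_bounds v.
rewrite /overlap /short /long /parent_link; cbn [slot lo hi].
case: eqP => [-> | /eqP]; first by have := index_bounds v; lia.
rewrite lt0n; split=> [[/index_inj] | [_ ->]] //; lia.
Qed.

Lemma overlap_long_short u v : overlap (long u) (short v) <-> link v u.
Proof. by rewrite overlap_sym overlap_short_long. Qed.

Definition place (b : bool) (v : V) := if odd (depth v) (+) b then short v else long v.

Lemma overlap_place b u v : u <> v -> overlap (place b u) (place b v) <->
  (odd (depth u) (+) b /\ link u v) \/ (odd (depth v) (+) b /\ link v u).
Proof.
move=> uv; have := overlap_short uv; have := overlap_long uv.
have := @parent_link_odd u v; have := @parent_link_odd v u.
rewrite /place; case: b; case: odd; case: odd;
  rewrite /= ?overlap_short_long ?overlap_long_short; intuition congruence.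
Qed.

Lemma rooted_forest_is_TRVG : is_TRVG e.
Proof.
apply: (@is_TRVG_slotted _ _ (place false) (place true)) => [v | u v uv | u v uv].
- have := index_bounds v; rewrite /place /long /short.
  by split; case: ifP => _; cbn [lo hi]; lia.
- rewrite !overlap_place //.
  have := @parent_link_asym u v; case: odd; case: odd => /=; intuition congruence.
- rewrite !overlap_place // forest_edgeE //.
  case: odd; case: odd => /=; intuition congruence.
Qed.

End RootedForest.

Lemma acyclic_no_detour (V : finType) (e : rel V) (u v w : V) :
  symmetric e -> irreflexive e -> ~ has_cycle e ->
  e u v -> e u w -> v != w -> ~~ connect [rel a b | e a b && (a != u) && (b != u)] v w.
Proof.
move=> e_sym e_irr acyclic uv uw vw; apply/negP => /connectP [p detour w_last].
case: (shortenP detour) w_last => {detour} p' detour uniq_p' _ w_last.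
have avoid x q : path [rel a b | e a b && (a != u) && (b != u)] x q ->
    path e x q && (u \notin q).
  elim: q x => //= y q IH x /andP [/andP [/andP [xy _] yu] /IH /andP [yq uq]].
  by rewrite xy yq in_cons negb_or eq_sym yu.
have /andP [p'_path p'_avoids] := avoid _ _ detour.
have vu : v != u by apply: contraTneq uv => ->; rewrite e_irr.
apply: acyclic; exists [:: u, v & p']; split; last split.
- by case: p' w_last {detour uniq_p' p'_path p'_avoids} => //= wv; rewrite wv eqxx in vw.
- by rewrite /= in_cons negb_or eq_sym vu p'_avoids.
- by rewrite /= rcons_path uv p'_path -w_last e_sym.
Qed.

Section TreeDepth.

Variables (V : finType) (e : rel V) (root : V).
Hypotheses (e_sym : symmetric e) (e_irr : irreflexive e) (acyclic : ~ has_cycle e).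
Hypothesis connected : forall v, connect e root v.

Fixpoint ball (k : nat) : {set V} :=
  if k is k'.+1 then ball k' :|: [set y | [exists x in ball k', e x y]] else [set root].

Lemma ball_edge k x y : x \in ball k -> e x y -> y \in ball k.+1.
Proof.
by move=> xk xy; rewrite /= !inE; apply/orP; right; apply/existsP; exists x; rewrite xk.
Qed.

Lemma ball_path k x p : x \in ball k -> path e x p -> last x p \in ball (k + size p).
Proof.
elim: p x k => [|y p IH] x k xk /=; first by rewrite addn0.
by case/andP=> xy yp; rewrite addnS -addSn; apply: IH (ball_edge xk xy) yp.
Qed.

Lemma ball_exists v : exists k, v \in ball k.
Proof.
have /connectP [p p_path ->] := connected v; exists (0 + size p)%N.
by apply: ball_path; rewrite ?inE.
Qed.

Definition depth v := ex_minn (ball_exists v).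

Lemma ball_depth v : v \in ball (depth v).
Proof. by rewrite /depth; case: ex_minnP. Qed.

Lemma depth_min v k : v \in ball k -> (depth v <= k)%N.
Proof. by rewrite /depth; case: ex_minnP => m _; apply. Qed.

Lemma depth0 v : depth v = 0%N -> v = root.
Proof. by move=> d0; have := ball_depth v; rewrite d0 inE => /eqP. Qed.

Lemma depth_edge u v : e u v -> (depth v <= (depth u).+1)%N.
Proof. by move=> uv; apply/depth_min/(ball_edge (ball_depth u)). Qed.

Lemma depth_lower_neighbour v k : depth v = k.+1 -> exists2 w, e w v & depth w = k.
Proof.
move=> dv; have := ball_depth v; rewrite dv /= inE => /orP [/depth_min | ].
  by rewrite dv ltnn.
rewrite inE => /existsP [w /andP [wk wv]]; exists w => //.
by have := depth_min wk; have := depth_edge wv; rewrite dv; lia.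
Qed.

(* Descending depth from v and from w reaches the root without passing through u,
   a detour that acyclicity forbids. *)
Lemma lower_neighbour_unique u v w :
  e u v -> e u w -> (depth v <= depth u)%N -> (depth w <= depth u)%N -> v = w.
Proof.
move=> uv uw dv dw; case: (eqVneq v w) => // vw; exfalso.
move/negP: (acyclic_no_detour e_sym e_irr acyclic uv uw vw); apply.
set e' := [rel a b | _].
have e'_sym : connect_sym e' by apply: sym_connect_sym => a b /=; rewrite e_sym andbAC.
have descend k x : depth x = k -> x != u -> (k <= depth u)%N -> connect e' x root.
  elim: k x => [|k IH] x dx xu k_le; first by rewrite (depth0 dx) connect0.
  have [y yx dy] := depth_lower_neighbour dx.
  have yu : y != u by apply: contraTneq k_le => yu; rewrite -yu dy ltnn.
  apply: connect_trans (IH y dy yu (ltnW k_le)); apply: connect1.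
  by rewrite /= e_sym yx xu yu.
have neq_u x : e u x -> x != u by apply: contraTneq => ->; rewrite e_irr.
apply: connect_trans (descend _ v erefl (neq_u v uv) dv) _.
by rewrite e'_sym; apply: descend (neq_u w uw) dw.
Qed.

Definition parent v := odflt v [pick w | e v w && (depth w < depth v)%N].

Lemma parent_spec v : (0 < depth v)%N -> e v (parent v) /\ (depth (parent v)).+1 = depth v.
Proof.
rewrite /parent; case: pickP => [w /andP [vw lt_wv] | none] /= pos.
  have wv : e w v by rewrite e_sym.
  by split=> //; have := depth_edge wv; lia.
case dv: (depth v) pos => [|k] // _; have [w wv dw] := depth_lower_neighbour dv.
by have := none w; rewrite e_sym wv dw dv ltnSn.
Qed.

Lemma edge_parent_link u v : u <> v -> e u v -> (depth v <= depth u)%N ->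
  parent_link depth parent u v.
Proof.
move=> neq uv dv; have pos : (0 < depth u)%N.
  rewrite lt0n; apply/eqP=> du0; apply: neq.
  by rewrite (depth0 du0) (depth0 (_ : depth v = 0%N)) //; lia.
have [u_pu dpu] := parent_spec pos; split=> //.
apply: lower_neighbour_unique u_pu uv _ dv; lia.
Qed.

Lemma tree_edgeE u v : u <> v ->
  e u v <-> parent_link depth parent u v \/ parent_link depth parent v u.
Proof.
move=> neq; split=> [uv | [[pos <-] | [pos <-]]].
- case: (leqP (depth v) (depth u)) => [dv | /ltnW du].
    by left; apply: edge_parent_link.
  by right; apply: edge_parent_link; rewrite 1?e_sym //; apply: nesym.
- by case: (parent_spec pos).
- by rewrite e_sym; case: (parent_spec pos).
Qed.

End TreeDepth.

Lemma tree_is_TRVG (V : finType) (e : rel V) :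
  symmetric e -> irreflexive e -> is_tree e -> is_TRVG e.
Proof.
move=> e_sym e_irr [/card_gt0P [root _] [connected acyclic]].
apply: (rooted_forest_is_TRVG (depth := depth (connected root))
                              (parent := parent (connected root))).
- by move=> v /(parent_spec e_sym) [].
- by move=> u v; apply: tree_edgeE.
Qed.

Theorem theorem1 :
  (* (i) threshold graphs *)
  (forall (V : finType) (e : rel V), is_threshold e -> is_TRVG (fun u v => e u v)) /\
  (* (ii) trees *)
  (forall (V : finType) (e : rel V), symmetric e -> irreflexive e -> is_tree e ->
     is_TRVG (fun u v => e u v)) /\
  (* (iii) cycles C_n, n >= 3 *)
  (forall n : nat, (3 <= n)%N -> is_TRVG (@cycle_adj n)) /\
  (* (iv) infinite rectangular grid *)
  is_TRVG rect_grid_adj /\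
  (* (v) infinite triangular grid *)
  is_TRVG tri_grid_adj /\
  (* (vi) infinite hexagonal grid *)
  is_TRVG hex_grid_adj.
Proof.
split; first exact: threshold_is_TRVG.
split; first exact: tree_is_TRVG.
split; first exact: cycle_is_TRVG.
split; first exact: rect_grid_is_TRVG.
split; first exact: tri_grid_is_TRVG.
exact: hex_grid_is_TRVG.
Qed.
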